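(* Let $\bar R_m(\varepsilon)$ be defined by $\bar R_1(\varepsilon)=\varepsilon$ and, for $m\ge2$, $\big[(-1)^m(1+\varepsilon)^m+(1+\varepsilon)\big]\bar R_m(\varepsilon)=-(3+\varepsilon)\sum_{j=1}^{m-1}\bar R_j(\varepsilon)\bar R_{m-j}(\varepsilon)$. Then each $\bar R_m$ is analytic at $\varepsilon=0$ and, as $\varepsilon\to0$, $$\bar R_{2m+1}(\varepsilon)=\varepsilon^{m+1}\big(a_m+O(\varepsilon)\big)\quad(m\ge0),\qquad \bar R_{2n}(\varepsilon)=\varepsilon^{n+1}\big(c_n+O(\varepsilon)\big)\quad(n\ge1),$$ where $$a_m=\frac{(-9)^m\,\Gamma(m+\tfrac12)}{\sqrt{\pi}\,m!},\qquad c_n=\frac{(-9)^n}{6}.$$ Equivalently, for $|\tau|<1/3$, $$\sum_{m\ge0}a_m\tau^{2m+1}=\frac{\tau}{\sqrt{1+9\tau^2}},\qquad \sum_{n\ge1}c_n\tau^{2n}=-\frac{3}{2}\,\frac{\tau^2}{1+9\tau^2}.$$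
   Context: The $\bar R_m$ are the coefficient functions of the transseries solution of the static logistic map $y(n+1)=(3+\varepsilon)y(n)(1-y(n))$ about its fixed point $(2+\varepsilon)/(3+\varepsilon)$, normalised by $\bar R_1=\varepsilon$. The coefficient $(-1)^m(1+\varepsilon)^m+(1+\varepsilon)$ is nonzero for $\varepsilon>0$, $m\ge 2$. *)

From Stdlib Require Import Reals Lra.
From Coquelicot Require Import Coquelicot.
Open Scope R_scope.

(* Gamma at half-integers: Gamma_half m = Γ(m + 1/2),
   via Γ(1/2) = sqrt π and Γ(x+1) = x Γ(x). *)
Fixpoint Gamma_half (m : nat) : R :=
  match m with
  | O => sqrt PI
  | S k => (INR k + / 2) * Gamma_half k
  end.

Definition a_coef (m : nat) : R :=
  (-9) ^ m * Gamma_half m / (sqrt PI * INR (Factorial.fact m)).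

Definition c_coef (n : nat) : R := (-9) ^ n / 6.

Definition is_Rbar_family (Rb : nat -> R -> R) : Prop :=
  (forall e, 0 < e -> Rb 1%nat e = e) /\
  (forall (m : nat) e, (2 <= m)%nat -> 0 < e ->
     ((-1) ^ m * (1 + e) ^ m + (1 + e)) * Rb m e =
     - (3 + e) * sum_f 1 (m - 1) (fun j => Rb j e * Rb (m - j)%nat e)).

(* f is analytic at 0 (from the right, where it is defined): it agrees on
   (0, r) with a convergent power series of positive radius. *)
Definition analytic_at_0 (f : R -> R) : Prop :=
  exists (b : nat -> R) (r : R), 0 < r /\
    Rbar_lt (Finite r) (CV_radius b) /\
    (forall e, 0 < e < r -> f e = PSeries b e).

(* We show by strong induction on m that \bar R_m(e) = e^(k_m) h_m(e) for small
   e > 0, with h_m analytic at 0, k_m = floor(m/2) + 1, h_(2n)(0) = c_n and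
   h_(2n+1)(0) = a_n.  For m even the prefactor is 2 + O(e); for m odd it is
      -e (1+e) S(e) with S(0) = m - 1, and its zero is compensated by the
      convolution sum having one more order.
   4. The series identities: A(x) = sum a_n x^n satisfies A^2 = 1/(1+9x) and
      A > 0, so A(x) = (1+9x)^(-1/2); the c-series is geometric. *)

From Stdlib Require Import Reals Ranalysis5 Lra Lia.
From Coquelicot Require Import Coquelicot.
Open Scope R_scope.

Lemma ex_pseries_radius (a : nat -> R) (x : R) :
  ex_pseries a x -> Rbar_le (Rabs x) (CV_radius a).
Proof.
  intros [l Hl]. apply Rbar_not_lt_le. intros Hout.
  apply (CV_disk_outside a x Hout), ex_series_lim_0.
  exists l. now apply is_pseries_R.
Qed.

Lemma pseries_terms_bounded (a : nat -> R) (x : R) :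
  Rbar_lt (Rabs x) (CV_radius a) -> exists M, forall n, Rabs (a n * x ^ n) <= M.
Proof.
  intros Hx. destruct (CV_radius_inside a x Hx) as [l Hl].
  apply is_pseries_R in Hl.
  destruct (filterlim_bounded (fun n => a n * x ^ n)) as [M HM].
  { exists 0. apply ex_series_lim_0. now exists l. }
  now exists M.
Qed.

Lemma Rbar_lt_shrink (r r' : R) (u : Rbar) :
  r <= r' -> Rbar_lt r' u -> Rbar_lt r u.
Proof. intros Hr Hr'. eapply Rbar_le_lt_trans; [|exact Hr']. exact Hr. Qed.

Definition analytic_near0 (g : R -> R) : Prop :=
  exists (a : nat -> R) (r : R), 0 < r /\ Rbar_lt r (CV_radius a) /\
    forall x, Rabs x < r -> g x = PSeries a x.

Lemma analytic_near0_ext (g h : R -> R) :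
  analytic_near0 g -> (forall x, g x = h x) -> analytic_near0 h.
Proof.
  intros [a [r [Hr [Ha Hg]]]] Hgh. exists a, r.
  repeat split; auto. intros x Hx. rewrite <- Hgh. auto.
Qed.

(* The constant c, as a power series: coefficients c, 0, 0, ... *)
Definition PS_const (c : R) : nat -> R := fun n => c * 0 ^ n.

Lemma is_pseries_PS_const (c x : R) : is_pseries (PS_const c) x c.
Proof.
  apply is_pseries_R.
  assert (H0 : Rabs 0 < 1) by (rewrite Rabs_R0; lra).
  assert (Hgeom : is_series (fun n => c * 0 ^ n) (c * / (1 - 0)))
    by apply (is_series_scal_l c (fun n => 0 ^ n)), is_series_geom, H0.
  rewrite Rminus_0_r, Rinv_1, Rmult_1_r in Hgeom.
  revert Hgeom. apply is_series_ext. intros n. unfold PS_const.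
  now rewrite Rmult_assoc, <- Rpow_mult_distr, Rmult_0_l.
Qed.

Lemma analytic_near0_const (c : R) : analytic_near0 (fun _ => c).
Proof.
  assert (Hrad : Rbar_le (Rabs 2) (CV_radius (PS_const c)))
    by (apply ex_pseries_radius; eexists; apply is_pseries_PS_const).
  rewrite Rabs_pos_eq in Hrad by lra.
  exists (PS_const c), 1. repeat split; [lra| |].
  - eapply Rbar_lt_le_trans; [|exact Hrad]. simpl. lra.
  - intros x _. symmetry. apply is_pseries_unique, is_pseries_PS_const.
Qed.

Lemma analytic_near0_plus (g h : R -> R) :
  analytic_near0 g -> analytic_near0 h -> analytic_near0 (fun x => g x + h x).
Proof.
  intros [a [r [Hr [Ha Hg]]]] [b [s [Hs [Hb Hh]]]].
  pose proof (Rmin_l r s). pose proof (Rmin_r r s).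
  exists (PS_plus a b), (Rmin r s). repeat split.
  - now apply Rmin_pos.
  - eapply Rbar_lt_le_trans; [|apply CV_radius_plus].
    apply (Rbar_min_case_strong _ _ (fun u => Rbar_lt (Rmin r s) u)); intros _.
    + now apply Rbar_lt_shrink with r.
    + now apply Rbar_lt_shrink with s.
  - intros x Hx.
    rewrite PSeries_plus, Hg, Hh by
      (lra || (apply CV_radius_inside; eapply Rbar_lt_shrink; [|exact Ha]; lra)
           || (apply CV_radius_inside; eapply Rbar_lt_shrink; [|exact Hb]; lra)).
    reflexivity.
Qed.

Lemma analytic_near0_mult (g h : R -> R) :
  analytic_near0 g -> analytic_near0 h -> analytic_near0 (fun x => g x * h x).
Proof.
  intros [a [r [Hr [Ha Hg]]]] [b [s [Hs [Hb Hh]]]].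
  set (t := Rmin r s). pose proof (Rmin_l r s). pose proof (Rmin_r r s).
  assert (Ht : 0 < t) by now apply Rmin_pos.
  assert (Hrad : Rbar_le t (CV_radius (PS_mult a b))).
  { rewrite <- (Rabs_pos_eq t) by lra.
    apply ex_pseries_radius, ex_pseries_mult; rewrite Rabs_pos_eq by lra.
    - now apply Rbar_lt_shrink with r.
    - now apply Rbar_lt_shrink with s. }
  exists (PS_mult a b), (t / 2). repeat split.
  - lra.
  - eapply Rbar_lt_le_trans; [|exact Hrad]. simpl. lra.
  - intros x Hx. unfold t in Hx.
    rewrite PSeries_mult, Hg, Hh by
      (lra || (eapply Rbar_lt_shrink; [|exact Ha]; lra)
           || (eapply Rbar_lt_shrink; [|exact Hb]; lra)).
    reflexivity.
Qed.

Lemma analytic_near0_mulx (g : R -> R) :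
  analytic_near0 g -> analytic_near0 (fun x => x * g x).
Proof.
  intros [a [r [Hr [Ha Hg]]]]. exists (PS_incr_1 a), r.
  rewrite CV_radius_incr_1. repeat split; auto.
  intros x Hx. rewrite PSeries_incr_1, Hg; auto.
Qed.

Lemma analytic_near0_id : analytic_near0 (fun x => x).
Proof.
  apply analytic_near0_ext with (fun x => x * 1).
  - apply analytic_near0_mulx, analytic_near0_const.
  - intros x. apply Rmult_1_r.
Qed.

Lemma analytic_near0_shift (c : R) : analytic_near0 (fun x => c + x).
Proof. apply analytic_near0_plus; [apply analytic_near0_const|apply analytic_near0_id]. Qed.

Lemma analytic_near0_pow (g : R -> R) (k : nat) :
  analytic_near0 g -> analytic_near0 (fun x => g x ^ k).
Proof.
  intros Hg. induction k as [|k IH].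
  - exact (analytic_near0_const 1).
  - now apply (analytic_near0_mult g (fun x => g x ^ k)).
Qed.

Lemma analytic_near0_sum (F : nat -> R -> R) (N : nat) :
  (forall i, analytic_near0 (F i)) ->
  analytic_near0 (fun x => sum_f_R0 (fun i => F i x) N).
Proof.
  intros HF. induction N as [|N IH]; [apply HF|].
  now apply (analytic_near0_plus (fun x => sum_f_R0 (fun i => F i x) N) (F (S N))).
Qed.

(* An analytic function is Lipschitz at 0: g x = g 0 + x f x with f continuous at 0. *)
Lemma analytic_near0_lipschitz (g : R -> R) : analytic_near0 g ->
  exists C d, 0 < d /\ forall x, Rabs x < d -> Rabs (g x - g 0) <= C * Rabs x.
Proof.
  intros [a [r [Hr [Ha Hg]]]].
  set (f := PSeries (PS_decr_1 a)).
  assert (Hdecomp : forall y, Rabs y < r -> g y = a O + y * f y).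
  { intros y Hy. rewrite Hg by auto. apply PSeries_decr_1, CV_radius_inside.
    eapply Rbar_lt_shrink; [|exact Ha]. lra. }
  assert (Hcont : continuity_pt f 0).
  { apply PSeries_continuity. rewrite CV_radius_decr_1, Rabs_R0.
    eapply Rbar_lt_shrink; [|exact Ha]. lra. }
  destruct (Hcont 1 ltac:(lra)) as [d [Hd Hf]].
  exists (Rabs (f 0) + 1), (Rmin r d). split; [now apply Rmin_pos|].
  intros x Hx. pose proof (Rmin_l r d). pose proof (Rmin_r r d).
  rewrite (Hdecomp x), (Hdecomp 0) by (rewrite ?Rabs_R0; lra).
  replace (a O + x * f x - (a O + 0 * f 0)) with (x * f x) by ring.
  rewrite Rabs_mult, Rmult_comm. apply Rmult_le_compat_r; [apply Rabs_pos|].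
  assert (Hfx : Rabs (f x - f 0) <= 1).
  { destruct (Req_dec x 0) as [->|Hx0]; [rewrite Rminus_diag, Rabs_R0; lra|].
    left. apply Hf. split; [split; [exact I|auto]|].
    simpl. unfold R_dist. rewrite Rminus_0_r. lra. }
  pose proof (Rabs_triang_inv (f x) (f 0)). lra.
Qed.
Section Reciprocal.

Variable a : nat -> R.

(* Coefficients b of the reciprocal series, from a * b = 1:
   b_0 = 1/a_0 and b_(n+1) = -(1/a_0) * sum_(j<=n) a_(j+1) b_(n-j).
   [recip_upto n] tabulates b_0, ..., b_n. *)
Fixpoint recip_upto (n : nat) : nat -> R :=
  match n with
  | O => fun _ => / a O
  | S k => let b := recip_upto k in
           fun i => if Nat.eqb i (S k)
                    then - / a O * sum_f_R0 (fun j => a (S j) * b (k - j)%nat) k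
                    else b i
  end.

Definition recip_coef (n : nat) : R := recip_upto n n.

Lemma recip_upto_coef (n i : nat) : (i <= n)%nat -> recip_upto n i = recip_coef i.
Proof.
  induction n as [|n IH]; intros Hi.
  - now replace i with O by lia.
  - destruct (Nat.eq_dec i (S n)) as [->|Hne]; [reflexivity|].
    simpl. replace (Nat.eqb i (S n)) with false by (symmetry; now apply Nat.eqb_neq).
    apply IH. lia.
Qed.

Lemma recip_coef_S (n : nat) :
  recip_coef (S n) = - / a O * sum_f_R0 (fun j => a (S j) * recip_coef (n - j)) n.
Proof.
  unfold recip_coef at 1. simpl. rewrite Nat.eqb_refl. f_equal.
  apply sum_eq. intros j Hj. f_equal. apply recip_upto_coef. lia.
Qed.

Hypothesis a0_nonzero : a O <> 0.

Lemma PS_mult_recip (n : nat) : PS_mult a recip_coef n = PS_const 1 n.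
Proof.
  unfold PS_mult, PS_const. destruct n as [|n].
  - simpl. unfold recip_coef. simpl. field. exact a0_nonzero.
  - rewrite decomp_sum by lia. simpl pred. rewrite Nat.sub_0_r, recip_coef_S.
    simpl. field. exact a0_nonzero.
Qed.

Lemma geometric_convolution (m : R) (k : nat) :
  sum_f_R0 (fun j => m * (1 + m) ^ (k - j)) k = (1 + m) ^ S k - 1.
Proof.
  rewrite (sum_f_R0_skip (fun j => m * (1 + m) ^ j) k).
  pose proof (GP_finite (1 + m) k) as Hgp. rewrite Nat.add_1_r in Hgp.
  rewrite <- Hgp. replace (1 + m - 1) with m by ring.
  rewrite Rmult_comm, scal_sum. apply sum_eq. intros j _. ring.
Qed.

Lemma recip_coef_bound (M rho : R) : 0 <= rho ->
  (forall n, Rabs (a (S n)) <= M * rho ^ S n) ->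
  forall n, Rabs (recip_coef n) <= / Rabs (a O) * ((1 + M / Rabs (a O)) * rho) ^ n.
Proof.
  intros Hrho Ha. set (A := Rabs (a O)). set (m := M / A).
  assert (HA : 0 < A) by now apply Rabs_pos_lt.
  intros n. induction n as [n IH] using Wf_nat.lt_wf_ind. destruct n as [|k].
  - unfold recip_coef; simpl. rewrite Rabs_inv. fold A. lra.
  - rewrite recip_coef_S, Rabs_mult, Rabs_Ropp, Rabs_inv. fold A.
    apply Rmult_le_compat_l; [left; now apply Rinv_0_lt_compat|].
    apply Rle_trans with (sum_f_R0 (fun j => rho ^ S k * (m * (1 + m) ^ (k - j))) k).
    + eapply Rle_trans; [apply sum_f_R0_triangle|]. apply sum_Rle. intros j Hj.
      rewrite Rabs_mult.
      assert (Hb : Rabs (recip_coef (k - j)) <= / A * ((1 + m) * rho) ^ (k - j))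
        by (apply IH; lia).
      eapply Rle_trans.
      { apply Rmult_le_compat; try apply Rabs_pos; [apply Ha|exact Hb]. }
      replace (rho ^ S k) with (rho ^ S j * rho ^ (k - j))
        by (rewrite <- pow_add; f_equal; lia).
      unfold m. rewrite Rpow_mult_distr. right. field. lra.
    + rewrite (sum_eq _ (fun j => m * (1 + m) ^ (k - j) * rho ^ S k)) by (intros; ring).
      rewrite <- scal_sum, geometric_convolution, Rpow_mult_distr.
      assert (0 <= rho ^ S k) by (apply pow_le; lra).
      nra.
Qed.

End Reciprocal.

Lemma pseries_bounded_radius (a : nat -> R) (x M : R) :
  (forall n, Rabs (a n * x ^ n) <= M) -> Rbar_le (Rabs x) (CV_radius a).
Proof.
  intros HM. apply (proj1 (CV_radius_bounded a)). exists M. intros n.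
  replace (Rabs (a n * Rabs x ^ n)) with (Rabs (a n * x ^ n)); [apply HM|].
  now rewrite !Rabs_mult, !RPow_abs, Rabs_Rabsolu.
Qed.

(* The reciprocal series of a series with a_0 <> 0 and positive radius has
   positive radius: with |a_n| r^n <= M, the geometric bound of
   recip_coef_bound gives radius at least r / (1 + M / |a_0|). *)
Lemma recip_coef_radius (a : nat -> R) (r : R) :
  0 < r -> Rbar_lt r (CV_radius a) -> a O <> 0 ->
  exists s, 0 < s /\ Rbar_le s (CV_radius (recip_coef a)).
Proof.
  intros Hr Ha Ha0.
  destruct (pseries_terms_bounded a r) as [M HM]; [now rewrite Rabs_pos_eq by lra|].
  set (A := Rabs (a O)). assert (HA : 0 < A) by now apply Rabs_pos_lt.
  assert (HM0 : 0 <= M) by (eapply Rle_trans; [apply Rabs_pos|apply (HM O)]).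
  set (L := (1 + M / A) * / r).
  assert (HL : 0 < L).
  { apply Rmult_lt_0_compat; [|now apply Rinv_0_lt_compat].
    assert (0 <= M / A) by (apply Rdiv_le_0_compat; lra). lra. }
  assert (Hcoef : forall n, Rabs (a (S n)) <= M * (/ r) ^ S n).
  { intros n. specialize (HM (S n)). assert (0 < r ^ S n) by (apply pow_lt; lra).
    rewrite Rabs_mult, (Rabs_pos_eq (r ^ S n)) in HM by lra. rewrite pow_inv.
    apply Rmult_le_reg_r with (r ^ S n); auto. field_simplify; lra. }
  assert (HiL : 0 < / L) by now apply Rinv_0_lt_compat.
  exists (/ L). split; [exact HiL|].
  rewrite <- (Rabs_pos_eq (/ L)) by lra.
  apply pseries_bounded_radius with (/ A). intros n.
  rewrite Rabs_mult, <- RPow_abs, (Rabs_pos_eq (/ L)) by lra.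
  eapply Rle_trans.
  { apply Rmult_le_compat_r; [apply pow_le; lra|].
    apply (recip_coef_bound a Ha0 M (/ r)); [left; now apply Rinv_0_lt_compat|exact Hcoef]. }
  fold A L. rewrite Rmult_assoc, <- Rpow_mult_distr, Rinv_r, pow1 by lra. lra.
Qed.

Lemma analytic_near0_inv (g : R -> R) :
  analytic_near0 g -> g 0 <> 0 -> analytic_near0 (fun x => / g x).
Proof.
  intros [a [r [Hr [Ha Hg]]]] Hg0.
  assert (Ha0 : a O <> 0).
  { rewrite <- PSeries_0, <- Hg; auto. rewrite Rabs_R0. lra. }
  destruct (recip_coef_radius a r Hr Ha Ha0) as [s [Hs Hrad]].
  pose proof (Rmin_l r s). pose proof (Rmin_r r s).
  assert (Hmin : 0 < Rmin r s) by now apply Rmin_pos.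
  exists (recip_coef a), (Rmin r s / 2). repeat split.
  - lra.
  - eapply Rbar_lt_le_trans; [|exact Hrad]. simpl. lra.
  - intros x Hx.
    assert (Hprod : PSeries a x * PSeries (recip_coef a) x = 1).
    { rewrite <- PSeries_mult.
      - rewrite (PSeries_ext _ _ x (PS_mult_recip a Ha0)).
        apply is_pseries_unique, is_pseries_PS_const.
      - eapply Rbar_lt_shrink; [|exact Ha]. lra.
      - eapply Rbar_lt_le_trans; [|exact Hrad]. simpl. lra. }
    assert (Hne : PSeries a x <> 0) by (intros Hz; rewrite Hz, Rmult_0_l in Hprod; lra).
    rewrite Hg by lra. apply Rmult_eq_reg_l with (PSeries a x); auto.
    now rewrite Rinv_r, Hprod.
Qed.

Definition has_leading_term (K : nat) (v : R) (F : R -> R) : Prop :=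
  exists h r, analytic_near0 h /\ h 0 = v /\ 0 < r /\
    forall e, 0 < e < r -> F e = e ^ K * h e.

Lemma has_leading_term_ext (K : nat) (v : R) (F G : R -> R) :
  (forall e, 0 < e -> F e = G e) -> has_leading_term K v F -> has_leading_term K v G.
Proof.
  intros HFG [h [r [Hh [Hv [Hr HF]]]]]. exists h, r.
  repeat split; auto. intros e He. rewrite <- HFG by lra. auto.
Qed.

Lemma has_leading_term_plus (K : nat) (v w : R) (F G : R -> R) :
  has_leading_term K v F -> has_leading_term K w G ->
  has_leading_term K (v + w) (fun e => F e + G e).
Proof.
  intros [h [r [Hh [Hv [Hr HF]]]]] [k [s [Hk [Hw [Hs HG]]]]].
  exists (fun x => h x + k x), (Rmin r s). repeat split.
  - now apply analytic_near0_plus.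
  - now rewrite Hv, Hw.
  - now apply Rmin_pos.
  - intros e He. pose proof (Rmin_l r s). pose proof (Rmin_r r s).
    rewrite HF, HG by lra. ring.
Qed.

Lemma has_leading_term_mult (K L : nat) (v w : R) (F G : R -> R) :
  has_leading_term K v F -> has_leading_term L w G ->
  has_leading_term (K + L) (v * w) (fun e => F e * G e).
Proof.
  intros [h [r [Hh [Hv [Hr HF]]]]] [k [s [Hk [Hw [Hs HG]]]]].
  exists (fun x => h x * k x), (Rmin r s). repeat split.
  - now apply analytic_near0_mult.
  - now rewrite Hv, Hw.
  - now apply Rmin_pos.
  - intros e He. pose proof (Rmin_l r s). pose proof (Rmin_r r s).
    rewrite HF, HG by lra. rewrite pow_add. ring.
Qed.

Lemma has_leading_term_scale (K : nat) (v : R) (u F : R -> R) :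
  analytic_near0 u -> has_leading_term K v F ->
  has_leading_term K (u 0 * v) (fun e => u e * F e).
Proof.
  intros Hu [h [r [Hh [Hv [Hr HF]]]]].
  exists (fun x => u x * h x), r. repeat split; auto.
  - now apply analytic_near0_mult.
  - now rewrite Hv.
  - intros e He. rewrite HF by auto. ring.
Qed.

(* A term of order L is also of order K <= L; its coefficient of e^K is
   0^(L-K) v, i.e. v if L = K and 0 if L > K. *)
Lemma has_leading_term_lower (K L : nat) (v : R) (F : R -> R) :
  (K <= L)%nat -> has_leading_term L v F -> has_leading_term K (0 ^ (L - K) * v) F.
Proof.
  intros HKL [h [r [Hh [Hv [Hr HF]]]]].
  exists (fun x => x ^ (L - K) * h x), r. repeat split; auto.
  - apply analytic_near0_mult; [apply analytic_near0_pow, analytic_near0_id|exact Hh].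
  - now rewrite Hv.
  - intros e He. rewrite HF by auto.
    rewrite <- Rmult_assoc, <- pow_add. do 2 f_equal. lia.
Qed.

Lemma has_leading_term_divx (K : nat) (v : R) (F : R -> R) :
  has_leading_term (S K) v F -> has_leading_term K v (fun e => F e / e).
Proof.
  intros [h [r [Hh [Hv [Hr HF]]]]]. exists h, r. repeat split; auto.
  intros e He. rewrite HF by auto. simpl. field. lra.
Qed.

Lemma has_leading_term_sum (K : nat) (F : nat -> R -> R) (v : nat -> R) (N : nat) :
  (forall i, (i <= N)%nat -> has_leading_term K (v i) (F i)) ->
  has_leading_term K (sum_f_R0 v N) (fun e => sum_f_R0 (fun i => F i e) N).
Proof.
  induction N as [|N IH]; intros HF; [now apply HF|].
  apply (has_leading_term_plus K _ _ (fun e => sum_f_R0 (fun i => F i e) N) (F (S N))).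
  - apply IH. intros i Hi. apply HF. lia.
  - now apply HF.
Qed.

Lemma has_leading_term_analytic (K : nat) (v : R) (F : R -> R) :
  has_leading_term K v F -> analytic_at_0 F.
Proof.
  intros [h [r [Hh [Hv [Hr HF]]]]].
  assert (HK : analytic_near0 (fun x => x ^ K * h x))
    by (apply analytic_near0_mult; [apply analytic_near0_pow, analytic_near0_id|exact Hh]).
  destruct HK as [a [s [Hs [Ha Hps]]]].
  exists a, (Rmin r s). pose proof (Rmin_l r s). pose proof (Rmin_r r s). repeat split.
  - now apply Rmin_pos.
  - now apply Rbar_lt_shrink with s.
  - intros e He. rewrite HF by lra. apply Hps. rewrite Rabs_pos_eq; lra.
Qed.

Lemma has_leading_term_bound (K : nat) (v : R) (F : R -> R) :
  has_leading_term K v F -> exists C d, 0 < d /\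
    forall e, 0 < e < d -> Rabs (F e - e ^ K * v) <= C * e ^ S K.
Proof.
  intros [h [r [Hh [Hv [Hr HF]]]]].
  destruct (analytic_near0_lipschitz h Hh) as [C [d [Hd HC]]].
  exists C, (Rmin r d). split; [now apply Rmin_pos|].
  intros e He. pose proof (Rmin_l r d). pose proof (Rmin_r r d).
  assert (HeK : 0 < e ^ K) by (apply pow_lt; lra).
  rewrite HF, <- Hv by lra.
  replace (e ^ K * h e - e ^ K * h 0) with (e ^ K * (h e - h 0)) by ring.
  rewrite Rabs_mult, (Rabs_pos_eq (e ^ K)) by lra.
  specialize (HC e ltac:(rewrite Rabs_pos_eq; lra)). rewrite (Rabs_pos_eq e) in HC by lra.
  simpl. apply Rle_trans with (e ^ K * (C * e)); [now apply Rmult_le_compat_l; lra|].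
  right. ring.
Qed.

Lemma a_coef_0 : a_coef O = 1.
Proof. unfold a_coef. simpl. pose proof (sqrt_lt_R0 PI PI_RGT_0). field. lra. Qed.

(* The recurrence Γ(n + 3/2) = (n + 1/2) Γ(n + 1/2) in terms of a_n. *)
Lemma a_coef_S (n : nat) : INR (S n) * a_coef (S n) = -9 * (INR n + / 2) * a_coef n.
Proof.
  unfold a_coef. rewrite fact_simpl, mult_INR. simpl Gamma_half. simpl pow.
  pose proof (sqrt_lt_R0 PI PI_RGT_0). pose proof (INR_fact_lt_0 n). pose proof (pos_INR n).
  rewrite S_INR. field. split; lra.
Qed.

Lemma c_coef_S (n : nat) : c_coef (S n) = -9 * c_coef n.
Proof. unfold c_coef. simpl. field. Qed.

(* T_n = sum_p a_p a_(n-p), the coefficients of (sum a_n x^n)^2, is computed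
   through the weighted convolution D_n = sum_p p a_p a_(n-p): 2 D_n = n T_n
   (by the symmetry p <-> n - p) and D_(n+1) = -9 (D_n + T_n / 2). *)
Definition conv_aa (n : nat) : R := sum_f_R0 (fun p => a_coef p * a_coef (n - p)) n.

Definition conv_aa_weighted (n : nat) : R :=
  sum_f_R0 (fun p => INR p * a_coef p * a_coef (n - p)) n.

Lemma conv_aa_weighted_symm (n : nat) : 2 * conv_aa_weighted n = INR n * conv_aa n.
Proof.
  unfold conv_aa_weighted, conv_aa.
  pose proof (sum_f_R0_skip (fun p => INR p * a_coef p * a_coef (n - p)) n) as Hrev.
  cbv beta in Hrev.
  replace (2 * _) with (sum_f_R0 (fun p => INR p * a_coef p * a_coef (n - p)) n +
    sum_f_R0 (fun p => INR (n - p) * a_coef (n - p) * a_coef (n - (n - p))) n)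
    by (rewrite Hrev; ring).
  rewrite scal_sum, <- plus_sum. apply sum_eq. intros p Hp.
  replace (n - (n - p))%nat with p by lia. rewrite minus_INR by lia. ring.
Qed.

Lemma conv_aa_weighted_S (n : nat) :
  conv_aa_weighted (S n) = -9 * (conv_aa_weighted n + conv_aa n / 2).
Proof.
  unfold conv_aa_weighted, conv_aa. rewrite decomp_sum by lia. simpl pred.
  rewrite Rmult_0_l, Rmult_0_l, Rplus_0_l.
  unfold Rdiv. rewrite (Rmult_comm _ (/ 2)), scal_sum, <- plus_sum, scal_sum.
  apply sum_eq. intros p Hp. replace (S n - S p)%nat with (n - p)%nat by lia.
  rewrite a_coef_S. ring.
Qed.

Lemma conv_aa_eq (n : nat) : conv_aa n = (-9) ^ n.
Proof.
  induction n as [|n IH].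
  - unfold conv_aa. simpl. rewrite a_coef_0. ring.
  - apply Rmult_eq_reg_l with (INR (S n)); [|apply not_0_INR; lia].
    pose proof (conv_aa_weighted_symm n) as Hn.
    pose proof (conv_aa_weighted_symm (S n)) as HSn.
    rewrite <- HSn, conv_aa_weighted_S, IH. rewrite IH in Hn. rewrite S_INR. simpl. lra.
Qed.

Lemma conv_ac_eq (n : nat) :
  sum_f_R0 (fun p => a_coef p * c_coef (n - p)) n = (2 * INR n + 1) * a_coef n / 6.
Proof.
  induction n as [|n IH].
  - simpl. rewrite a_coef_0. unfold c_coef. simpl. field.
  - rewrite tech5, Nat.sub_diag.
    rewrite (sum_eq _ (fun p => a_coef p * c_coef (n - p) * -9)).
    + rewrite <- scal_sum, IH. pose proof (a_coef_S n) as Ha.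
      rewrite S_INR in *. unfold c_coef. simpl. lra.
    + intros p Hp. replace (S n - p)%nat with (S (n - p)) by lia.
      rewrite c_coef_S. ring.
Qed.

(* Predicted order and leading coefficient of \bar R_m:
   \bar R_(2n) ~ c_n e^(n+1) and \bar R_(2n+1) ~ a_n e^(n+1). *)
Definition lead_order (m : nat) : nat := (Nat.div2 m + 1)%nat.
Definition lead_coef (m : nat) : R :=
  if Nat.even m then c_coef (Nat.div2 m) else a_coef (Nat.div2 m).

Lemma lead_order_even (p : nat) : lead_order (2 * p) = (p + 1)%nat.
Proof. unfold lead_order. now rewrite Nat.div2_double. Qed.

Lemma lead_order_odd (p : nat) : lead_order (2 * p + 1) = (p + 1)%nat.
Proof. unfold lead_order. now rewrite Nat.div2_odd'. Qed.

Lemma lead_coef_even (p : nat) : lead_coef (2 * p) = c_coef p.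
Proof. unfold lead_coef. now rewrite Nat.even_even, Nat.div2_double. Qed.

Lemma lead_coef_odd (p : nat) : lead_coef (2 * p + 1) = a_coef p.
Proof. unfold lead_coef. now rewrite Nat.even_odd, Nat.div2_odd'. Qed.

(* Order and leading coefficient of the convolution sum_(j=1)^(m-1) R_j R_(m-j):
   every product has order at least conv_order m, and only those of exactly
   that order contribute to the coefficient of e^(conv_order m). *)
Definition conv_order (m : nat) : nat := (Nat.div2 (m + 1) + 1)%nat.

Definition conv_coef (m : nat) : R :=
  sum_f_R0 (fun x => 0 ^ (lead_order (x + 1) + lead_order (m - (x + 1)) - conv_order m) *
                     (lead_coef (x + 1) * lead_coef (m - (x + 1)))) (m - 1 - 1).

Lemma conv_order_le (m j : nat) : (1 <= j <= m - 1)%nat ->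
  (conv_order m <= lead_order j + lead_order (m - j))%nat.
Proof.
  intros Hj. unfold conv_order, lead_order.
  pose proof (Nat.div2_odd j). pose proof (Nat.div2_odd (m - j)).
  pose proof (Nat.div2_odd (m + 1)).
  destruct (Nat.odd j), (Nat.odd (m - j)), (Nat.odd (m + 1)); simpl in *; lia.
Qed.

Lemma sum_f_R0_odd_length (f : nat -> R) (n : nat) :
  sum_f_R0 f (2 * n + 1) =
  sum_f_R0 (fun l => f (2 * l)%nat) n + sum_f_R0 (fun l => f (2 * l + 1)%nat) n.
Proof.
  induction n as [|n IH]; [simpl; ring|].
  replace (2 * S n + 1)%nat with (S (S (2 * n + 1))) by lia.
  rewrite !tech5, IH. replace (S (2 * n + 1)) with (2 * S n)%nat by lia.
  replace (S (2 * S n)) with (2 * S n + 1)%nat by lia. ring.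
Qed.

Lemma sum_f_R0_even_terms (f : nat -> R) (n : nat) :
  (forall l, (l < n)%nat -> f (2 * l + 1)%nat = 0) ->
  sum_f_R0 f (2 * n) = sum_f_R0 (fun l => f (2 * l)%nat) n.
Proof.
  induction n as [|n IH]; intros Hodd; [reflexivity|].
  replace (2 * S n)%nat with (S (S (2 * n))) by lia.
  rewrite !tech5, IH by (intros; apply Hodd; lia).
  replace (S (2 * n)) with (2 * n + 1)%nat by lia.
  replace (S (2 * n + 1)) with (2 * S n)%nat by lia.
  rewrite Hodd by lia. ring.
Qed.

(* m = 2n+2: only the odd-odd products R_(2l+1) R_(2(n-l)+1) have minimal order. *)
Lemma conv_coef_even (n : nat) : conv_coef (2 * S n) = (-9) ^ n.
Proof.
  replace (2 * S n)%nat with (2 * n + 2)%nat by lia. unfold conv_coef.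
  replace (2 * n + 2 - 1 - 1)%nat with (2 * n)%nat by lia.
  rewrite sum_f_R0_even_terms.
  - rewrite <- conv_aa_eq. apply sum_eq. intros l Hl.
    replace (2 * n + 2 - (2 * l + 1))%nat with (2 * (n - l) + 1)%nat by lia.
    unfold conv_order. replace (2 * n + 2 + 1)%nat with (2 * (n + 1) + 1)%nat by lia.
    rewrite Nat.div2_odd', !lead_order_odd, !lead_coef_odd.
    replace (l + 1 + (n - l + 1) - (n + 1 + 1))%nat with O by lia. simpl. ring.
  - intros l Hl. replace (2 * l + 1 + 1)%nat with (2 * (l + 1))%nat by lia.
    replace (2 * n + 2 - 2 * (l + 1))%nat with (2 * (n - l))%nat by lia.
    unfold conv_order. replace (2 * n + 2 + 1)%nat with (2 * (n + 1) + 1)%nat by lia.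
    rewrite Nat.div2_odd', !lead_order_even.
    replace (l + 1 + 1 + (n - l + 1) - (n + 1 + 1))%nat with 1%nat by lia. simpl. ring.
Qed.

(* m = 2n+3: all products have minimal order; the odd-even and even-odd halves
   are both equal to sum_(l<=n) a_l c_(n+1-l) = (n+1) a_(n+1) / 3. *)
Lemma conv_coef_odd (n : nat) : conv_coef (2 * S n + 1) = 2 * (INR n + 1) * a_coef (S n) / 3.
Proof.
  replace (2 * S n + 1)%nat with (2 * n + 3)%nat by lia.
  set (E := sum_f_R0 (fun l => a_coef l * c_coef (S n - l)) n).
  assert (HE : E = (INR n + 1) * a_coef (S n) / 3).
  { pose proof (conv_ac_eq (S n)) as Hac. rewrite tech5, Nat.sub_diag in Hac.
    fold E in Hac. rewrite S_INR in Hac. unfold c_coef in Hac. simpl in Hac. lra. }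
  unfold conv_coef, conv_order.
  replace (2 * n + 3 - 1 - 1)%nat with (2 * n + 1)%nat by lia.
  replace (2 * n + 3 + 1)%nat with (2 * (n + 2))%nat by lia.
  rewrite Nat.div2_double, sum_f_R0_odd_length.
  replace (sum_f_R0 _ n) with E at 1.
  2: { apply sum_eq. intros l Hl.
       replace (2 * n + 3 - (2 * l + 1))%nat with (2 * (S n - l))%nat by lia.
       rewrite lead_order_odd, lead_order_even, lead_coef_odd, lead_coef_even.
       replace (l + 1 + (S n - l + 1) - (n + 2 + 1))%nat with O by lia. simpl. ring. }
  replace (sum_f_R0 _ n) with E.
  2: { pose proof (sum_f_R0_skip (fun l => a_coef l * c_coef (S n - l)) n) as Hrev.
       cbv beta in Hrev. fold E in Hrev. rewrite <- Hrev. apply sum_eq. intros l Hl.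
       replace (2 * l + 1 + 1)%nat with (2 * (l + 1))%nat by lia.
       replace (2 * n + 3 - 2 * (l + 1))%nat with (2 * (n - l) + 1)%nat by lia.
       rewrite lead_order_even, lead_order_odd, lead_coef_even, lead_coef_odd.
       replace (l + 1 + 1 + (n - l + 1) - (n + 2 + 1))%nat with O by lia.
       replace (S n - (n - l))%nat with (l + 1)%nat by lia. simpl. ring. }
  rewrite HE. field.
Qed.

Section Recursion.

Variable Rb : nat -> R -> R.
Hypothesis HR : is_Rbar_family Rb.

Definition leading_below (m : nat) : Prop :=
  forall j, (1 <= j < m)%nat -> has_leading_term (lead_order j) (lead_coef j) (Rb j).

Lemma Rb_conv_leading (m : nat) : (2 <= m)%nat -> leading_below m ->
  has_leading_term (conv_order m) (conv_coef m)
    (fun e => sum_f 1 (m - 1) (fun j => Rb j e * Rb (m - j)%nat e)).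
Proof.
  intros Hm IH. unfold sum_f, conv_coef.
  apply (has_leading_term_sum _ (fun x e => Rb (x + 1)%nat e * Rb (m - (x + 1))%nat e)).
  intros x Hx. apply has_leading_term_lower; [apply conv_order_le; lia|].
  apply has_leading_term_mult; apply IH; lia.
Qed.

(* For m = 2n+2 the prefactor of \bar R_m is (1+e)^m + (1+e), equal to 2 at e = 0. *)
Lemma Rb_leading_even (n : nat) : leading_below (2 * S n) ->
  has_leading_term (lead_order (2 * S n)) (lead_coef (2 * S n)) (Rb (2 * S n)).
Proof.
  intros IH.
  set (u := fun e => - (3 + e) * / ((1 + e) ^ (2 * S n) + (1 + e))).
  assert (Hu : analytic_near0 u).
  { apply analytic_near0_mult.
    - apply analytic_near0_ext with (fun x => -1 * (3 + x)); [|intros; ring].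
      apply analytic_near0_mult; [apply analytic_near0_const|apply analytic_near0_shift].
    - apply analytic_near0_inv.
      + apply analytic_near0_plus; [apply analytic_near0_pow|]; apply analytic_near0_shift.
      + rewrite Rplus_0_r, pow1. lra. }
  pose proof (has_leading_term_scale _ _ u _ Hu (Rb_conv_leading (2 * S n) ltac:(lia) IH)) as Hlead.
  replace (conv_order (2 * S n)) with (lead_order (2 * S n)) in Hlead
    by (unfold conv_order; rewrite lead_order_even, Nat.div2_odd'; lia).
  replace (u 0 * conv_coef (2 * S n)) with (lead_coef (2 * S n)) in Hlead
    by (rewrite conv_coef_even, lead_coef_even, c_coef_S; unfold u, c_coef;
        rewrite !Rplus_0_r, pow1; field).
  revert Hlead. apply has_leading_term_ext. intros e He.
  destruct HR as [_ Hrec]. specialize (Hrec (2 * S n)%nat e ltac:(lia) He).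
  rewrite pow_1_even, Rmult_1_l in Hrec.
  assert (0 < (1 + e) ^ (2 * S n)) by (apply pow_lt; lra).
  unfold u. apply (Rmult_eq_reg_l ((1 + e) ^ (2 * S n) + (1 + e))); [|lra].
  rewrite Hrec. field. lra.
Qed.

Lemma odd_prefactor (n : nat) (e : R) :
  (-1) ^ (2 * S n + 1) * (1 + e) ^ (2 * S n + 1) + (1 + e) =
  - ((1 + e) * e * sum_f_R0 (fun i => (1 + e) ^ i) (2 * n + 1)).
Proof.
  pose proof (GP_finite (1 + e) (2 * n + 1)) as Hgp.
  replace (2 * S n + 1)%nat with (S (2 * S n)) by lia.
  rewrite pow_1_odd, <- tech_pow_Rmult.
  replace (2 * S n)%nat with (2 * n + 1 + 1)%nat by lia.
  replace ((1 + e) ^ (2 * n + 1 + 1)) with (sum_f_R0 (fun i => (1 + e) ^ i) (2 * n + 1) * e + 1)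
    by (replace (1 + e - 1) with e in Hgp by ring; lra).
  ring.
Qed.

(* For m = 2n+3 the prefactor vanishes to first order at e = 0 (S(0) = 2n+2),
   which is compensated by the extra order of the convolution sum. *)
Lemma Rb_leading_odd (n : nat) : leading_below (2 * S n + 1) ->
  has_leading_term (lead_order (2 * S n + 1)) (lead_coef (2 * S n + 1)) (Rb (2 * S n + 1)).
Proof.
  intros IH.
  set (Sgeom := fun e => sum_f_R0 (fun i => (1 + e) ^ i) (2 * n + 1)).
  set (u := fun e => (3 + e) * / ((1 + e) * Sgeom e)).
  assert (HSgeom : Sgeom 0 = 2 * (INR n + 1)).
  { unfold Sgeom. rewrite (sum_eq _ (fun _ => 1)) by (intros; now rewrite Rplus_0_r, pow1).
    rewrite sum_cte, S_INR, plus_INR, mult_INR. simpl. ring. }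
  assert (Hu : analytic_near0 u).
  { apply analytic_near0_mult; [apply analytic_near0_shift|].
    apply analytic_near0_inv.
    - apply analytic_near0_mult; [apply analytic_near0_shift|].
      apply (analytic_near0_sum (fun i x => (1 + x) ^ i)). intros i.
      apply analytic_near0_pow, analytic_near0_shift.
    - rewrite HSgeom, Rplus_0_r. pose proof (pos_INR n). lra. }
  pose proof (Rb_conv_leading (2 * S n + 1) ltac:(lia) IH) as Hconv.
  replace (conv_order (2 * S n + 1)) with (S (lead_order (2 * S n + 1))) in Hconv
    by (unfold conv_order; rewrite lead_order_odd;
        replace (2 * S n + 1 + 1)%nat with (2 * S (S n))%nat by lia;
        rewrite Nat.div2_double; lia).
  pose proof (has_leading_term_scale _ _ u _ Hu (has_leading_term_divx _ _ _ Hconv)) as Hlead.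
  replace (u 0 * conv_coef (2 * S n + 1)) with (lead_coef (2 * S n + 1)) in Hlead
    by (rewrite conv_coef_odd, lead_coef_odd; unfold u; rewrite HSgeom, !Rplus_0_r;
        pose proof (pos_INR n); field; lra).
  revert Hlead. apply has_leading_term_ext. intros e He.
  destruct HR as [_ Hrec]. specialize (Hrec (2 * S n + 1)%nat e ltac:(lia) He).
  rewrite odd_prefactor in Hrec. fold (Sgeom e) in Hrec.
  assert (HSgeome : 0 < Sgeom e) by (apply tech1; intros; apply pow_lt; lra).
  assert (Hpos : 0 < (1 + e) * e * Sgeom e) by (repeat apply Rmult_lt_0_compat; lra).
  unfold u. apply (Rmult_eq_reg_l (- ((1 + e) * e * Sgeom e))); [|lra].
  rewrite Hrec. field. repeat split; lra.
Qed.

Lemma Rb_leading (m : nat) : (1 <= m)%nat ->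
  has_leading_term (lead_order m) (lead_coef m) (Rb m).
Proof.
  induction m as [m IH] using Wf_nat.lt_wf_ind. intros Hm.
  assert (IHbelow : leading_below m) by (intros j Hj; apply IH; lia).
  destruct (Nat.Even_or_Odd m) as [[k ->]|[k ->]].
  - destruct k as [|n]; [lia|]. now apply Rb_leading_even.
  - destruct k as [|n].
    + exists (fun _ => 1), 1. repeat split; [apply analytic_near0_const| |lra|].
      * simpl. unfold lead_coef. simpl. now rewrite a_coef_0.
      * intros e He. destruct HR as [HR1 _]. simpl. rewrite HR1 by lra. ring.
    + now apply Rb_leading_odd.
Qed.

End Recursion.

(* |a_n| <= 9^n, since |a_(n+1) / a_n| = 9 (n + 1/2) / (n + 1) <= 9. *)
Lemma a_coef_bound (n : nat) : Rabs (a_coef n) <= 9 ^ n.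
Proof.
  induction n as [|n IH]; [rewrite a_coef_0, Rabs_R1; simpl; lra|].
  pose proof (pos_INR n).
  assert (Hratio : a_coef (S n) = -9 * ((INR n + / 2) / INR (S n)) * a_coef n).
  { apply (Rmult_eq_reg_l (INR (S n))); [|rewrite S_INR; lra].
    rewrite a_coef_S. rewrite S_INR. field. lra. }
  assert (Hq : 0 <= (INR n + / 2) / INR (S n) <= 1).
  { rewrite S_INR. split; [apply Rdiv_le_0_compat; lra|].
    apply Rmult_le_reg_r with (INR n + 1); [lra|]. field_simplify; lra. }
  rewrite Hratio, !Rabs_mult, (Rabs_pos_eq ((INR n + / 2) / INR (S n))) by lra.
  replace (Rabs (-9)) with 9 by (rewrite Rabs_left; lra).
  simpl pow. pose proof (Rabs_pos (a_coef n)).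
  apply Rle_trans with (9 * Rabs (a_coef n)); [|lra].
  rewrite Rmult_assoc. apply Rmult_le_compat_l; [lra|]. nra.
Qed.

Lemma a_coef_radius (x : R) : Rabs x < / 9 -> Rbar_lt (Rabs x) (CV_radius a_coef).
Proof.
  intros Hx. eapply Rbar_lt_le_trans with (Rabs (/ 9)); [rewrite (Rabs_pos_eq (/ 9)); simpl; lra|].
  apply pseries_bounded_radius with 1. intros n.
  rewrite Rabs_mult, <- RPow_abs, (Rabs_pos_eq (/ 9)) by lra.
  apply Rle_trans with (9 ^ n * (/ 9) ^ n).
  - apply Rmult_le_compat_r; [apply pow_le; lra|apply a_coef_bound].
  - rewrite <- Rpow_mult_distr, Rinv_r, pow1 by lra. lra.
Qed.

Lemma a_series_square (x : R) : Rabs x < / 9 ->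
  PSeries a_coef x * PSeries a_coef x = / (1 + 9 * x).
Proof.
  intros Hx. rewrite <- PSeries_mult by now apply a_coef_radius.
  rewrite (PSeries_ext _ (fun n => (-9) ^ n)) by (intros n; apply conv_aa_eq).
  apply is_pseries_unique, is_pseries_R.
  apply (is_series_ext (fun n => (-9 * x) ^ n)); [intros n; apply Rpow_mult_distr|].
  replace (1 + 9 * x) with (1 - (-9 * x)) by ring.
  apply is_series_geom. rewrite Rabs_mult, Rabs_left by lra. lra.
Qed.

(* A is continuous, equals 1 at 0 and never vanishes, hence it is positive. *)
Lemma a_series_pos (x : R) : Rabs x < / 9 -> 0 < PSeries a_coef x.
Proof.
  intros Hx.
  assert (Hnz : forall y, - / 9 < y < / 9 -> PSeries a_coef y <> 0).
  { intros y Hy Hz. pose proof (a_series_square y (Rabs_def1 _ _ (proj2 Hy) (proj1 Hy))) as Hsq.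
    rewrite Hz, Rmult_0_l in Hsq.
    assert (0 < / (1 + 9 * y)) by (apply Rinv_0_lt_compat; lra). lra. }
  assert (Hcont : forall y, - / 9 < y < / 9 -> continuity_pt (PSeries a_coef) y).
  { intros y Hy. apply PSeries_continuity, a_coef_radius. apply Rabs_def1; lra. }
  assert (H0 : PSeries a_coef 0 = 1) by (rewrite PSeries_0; apply a_coef_0).
  apply Rabs_def2 in Hx.
  destruct (Rlt_or_le 0 (PSeries a_coef x)) as [Hpos|Hneg]; [exact Hpos|exfalso].
  assert (Hneg' : PSeries a_coef x < 0)
    by (destruct Hneg as [|Hz]; [assumption|exact (False_ind _ (Hnz x ltac:(lra) Hz))]).
  destruct (Rtotal_order x 0) as [Hlt|[->|Hgt]]; [|lra|].
  - destruct (IVT_interv (PSeries a_coef) x 0) as [z [Hz Hfz]]; try lra.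
    + intros y Hy. apply Hcont. lra.
    + apply (Hnz z); [lra|exact Hfz].
  - destruct (IVT_interv (fun t => - PSeries a_coef t) 0 x) as [z [Hz Hfz]]; try lra.
    + intros y Hy. apply continuity_pt_opp, Hcont. lra.
    + apply (Hnz z); lra.
Qed.

Lemma a_series_value (x : R) : Rabs x < / 9 -> PSeries a_coef x = / sqrt (1 + 9 * x).
Proof.
  intros Hx. apply Rabs_def2 in Hx as Hx'.
  rewrite <- sqrt_inv, <- a_series_square by (auto || lra).
  rewrite sqrt_square; [reflexivity|]. left. now apply a_series_pos.
Qed.

(* sum_m a_m tau^(2m+1) = tau A(tau^2) = tau / sqrt (1 + 9 tau^2). *)
Lemma a_series_odd (tau : R) : Rabs tau < / 3 ->
  is_series (fun m => a_coef m * tau ^ (2 * m + 1)) (tau / sqrt (1 + 9 * tau ^ 2)).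
Proof.
  intros Ht.
  assert (Hx : Rabs (tau ^ 2) < / 9).
  { rewrite <- RPow_abs. pose proof (Rabs_pos tau). simpl. nra. }
  pose proof (PSeries_correct _ _ (CV_radius_inside _ _ (a_coef_radius _ Hx))) as Hps.
  apply is_pseries_R in Hps. rewrite a_series_value in Hps by exact Hx.
  apply (is_series_scal_l tau) in Hps.
  revert Hps. apply is_series_ext. intros n.
  rewrite pow_add, pow_mult. unfold scal, mult; simpl. unfold mult; simpl. ring.
Qed.

(* sum_(n>=1) c_n tau^(2n) = -(3/2) tau^2 sum_k (-9 tau^2)^k, a geometric series. *)
Lemma c_series_even (tau : R) : Rabs tau < / 3 ->
  is_series (fun k => c_coef (S k) * tau ^ (2 * S k))
    (- (3 / 2) * (tau ^ 2 / (1 + 9 * tau ^ 2))).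
Proof.
  intros Ht.
  assert (Hq : Rabs (-9 * tau ^ 2) < 1).
  { rewrite Rabs_mult, <- RPow_abs, Rabs_left by lra. pose proof (Rabs_pos tau). simpl. nra. }
  pose proof (is_series_scal_l (- (3 / 2) * tau ^ 2) _ _ (is_series_geom _ Hq)) as Hgeom.
  replace (- (3 / 2) * (tau ^ 2 / (1 + 9 * tau ^ 2)))
    with (scal (- (3 / 2) * tau ^ 2) (/ (1 - -9 * tau ^ 2))).
  - revert Hgeom. apply is_series_ext. intros n.
    rewrite pow_mult, Rpow_mult_distr. unfold scal, mult; simpl. unfold mult; simpl.
    unfold c_coef. simpl. field.
  - unfold scal; simpl; unfold mult; simpl. field.
    pose proof (pow2_ge_0 tau). lra.
Qed.

Theorem mainTheorem2 (Rb : nat -> R -> R) (HR : is_Rbar_family Rb) :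
  (forall m : nat, (1 <= m)%nat -> analytic_at_0 (Rb m)) /\
  (forall m : nat, exists C delta : R, 0 < delta /\
     forall e, 0 < e < delta ->
       Rabs (Rb (2 * m + 1)%nat e - e ^ (m + 1) * a_coef m) <= C * e ^ (m + 2)) /\
  (forall n : nat, (1 <= n)%nat -> exists C delta : R, 0 < delta /\
     forall e, 0 < e < delta ->
       Rabs (Rb (2 * n)%nat e - e ^ (n + 1) * c_coef n) <= C * e ^ (n + 2)) /\
  (forall tau : R, Rabs tau < / 3 ->
     is_series (fun m : nat => a_coef m * tau ^ (2 * m + 1))
               (tau / sqrt (1 + 9 * tau ^ 2)) /\
     is_series (fun k : nat => c_coef (S k) * tau ^ (2 * S k))
               (- (3 / 2) * (tau ^ 2 / (1 + 9 * tau ^ 2)))).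
Proof.
  repeat split.
  - intros m Hm. exact (has_leading_term_analytic _ _ _ (Rb_leading Rb HR m Hm)).
  - intros m. pose proof (Rb_leading Rb HR (2 * m + 1) ltac:(lia)) as Hlead.
    rewrite lead_order_odd, lead_coef_odd in Hlead.
    replace (m + 2)%nat with (S (m + 1)) by lia.
    exact (has_leading_term_bound _ _ _ Hlead).
  - intros n Hn. pose proof (Rb_leading Rb HR (2 * n) ltac:(lia)) as Hlead.
    rewrite lead_order_even, lead_coef_even in Hlead.
    replace (n + 2)%nat with (S (n + 1)) by lia.
    exact (has_leading_term_bound _ _ _ Hlead).
  - now apply a_series_odd.
  - now apply c_series_even.
Qed.
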